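(* Let $K=\mathbb{F}_2(t)$, so that the completion at the infinite place is $K_{t^{-1}}=\mathbb{F}_2((t^{-1}))$. Write $y\in K_{t^{-1}}$ as $y=\sum_{i\le N}a_it^i$ with $N\in\mathbb{Z}$ and $a_i\in\mathbb{F}_2$, setting $a_i=0$ for $i>N$. Then the conic $C_y: x_0^2+x_0x_1+yx_1^2=tx_2^2$ has a $K_{t^{-1}}$-point if and only if $a_0=0$. *)

(* Concrete model of K_{t^-1} = F_2((t^-1)) (formal Laurent
   series in t^-1 over F_2, with F_2 represented by bool: + is xor, * is &&). *)
From mathcomp Require Import all_boot all_order all_algebra.
Set Implicit Arguments. Unset Strict Implicit. Unset Printing Implicit Defensive.
Import Order.TTheory GRing.Theory Num.Theory.

(* LSer N d represents  y = sum_{k >= 0} d k * t^(N - k)  *)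
Record lser := LSer { lead : int; dig : nat -> bool }.

Definition coef (x : lser) (i : int) : bool :=
  if (i <= lead x)%R then dig x `|(lead x - i)%R|%N else false.

Definition lseq (x y : lser) : Prop := forall i : int, coef x i = coef y i.

Definition lzero : lser := LSer 0%R (fun _ => false).
Definition lt_ : lser := LSer 1%R (fun k => k == 0%N).

Definition ladd (x y : lser) : lser :=
  let M := Num.max (lead x) (lead y) in
  LSer M (fun k => addb (coef x (M - k%:Z)%R) (coef y (M - k%:Z)%R)).

Definition lmul (x y : lser) : lser :=
  LSer (lead x + lead y)%R
       (fun k => \big[addb/false]_(j < k.+1) (dig x j && dig y (k - j))).

Definition lnonzero (x : lser) : Prop := exists i : int, coef x i = true.

Definition conic_has_point (y : lser) : Prop :=
  exists x0 x1 x2 : lser,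
    (lnonzero x0 \/ lnonzero x1 \/ lnonzero x2) /\
    lseq (ladd (ladd (lmul x0 x0) (lmul x0 x1)) (lmul y (lmul x1 x1)))
         (lmul lt_ (lmul x2 x2)).

(* In characteristic 2, a_0 = 0 is exactly the condition for y = z^2 + z + t w^2 to be
   solvable: comparing coefficients forces z_m + z_{2m} = a_{2m} and w_m = a_{2m+1} + z_{2m+1},
   and the first system is solved along the chains m, 2m, 4m, ... (finite since y is bounded
   above); the only obstruction is the equation z_0 + z_0 = a_0 at m = 0.  Given such z, w,
   the point (z, 1, w) lies on C_y.  Conversely, if a_0 = 1, write y + 1 = z^2 + z + t w^2; the substitution
   X = x0 + z x1, Z = x2 + w x1 turns a point of C_y into a solution of X^2 + X x1 + x1^2 = t Z^2.
   Since X^2 + X Y + Y^2 is anisotropic over F_2, the top coefficient of the left side sits in even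
   degree, while that of t Z^2 sits in odd degree, so X = x1 = Z = 0 and the point is trivial. *)

From mathcomp Require Import all_boot all_order all_algebra.
From mathcomp Require Import zify ring.
Set Implicit Arguments. Unset Strict Implicit. Unset Printing Implicit Defensive.
Import Order.TTheory GRing.Theory Num.Theory.

Lemma big_addb_sym k (f : nat -> bool) :
  (forall j, j <= k -> f j = f (k - j)) ->
  \big[addb/false]_(j < k.+1) f j = if odd k then false else f k./2.
Proof.
elim/ltn_ind: k f => -[|[|k]] IH f f_sym.
- by rewrite big_ord_recl big_ord0 addbF.
- by rewrite big_ord_recl big_ord_recl big_ord0 /= addbF (f_sym 1) // addbb.
- rewrite big_ord_recl big_ord_recr /= (IH k _ (fun j => f j.+1)) //; last first.
    by move=> j le_jk; rewrite f_sym; [congr f|]; lia.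
  by rewrite -(f_sym 0) // negbK addbC -addbA addbb addbF.
Qed.

Local Open Scope ring_scope.

Lemma int_le_split (L i : int) : i <= L -> exists k : nat, i = L - k%:Z.
Proof. by move=> le_iL; exists `|L - i|%N; lia. Qed.

Lemma coef_dig (a : lser) (k : nat) : coef a (lead a - k%:Z) = dig a k.
Proof. by rewrite /coef ifT; [congr dig|]; lia. Qed.

Lemma coef_gt_lead (a : lser) i : lead a < i -> coef a i = false.
Proof. by move=> lt_ai; rewrite /coef ifF //; lia. Qed.

Lemma coef_ladd x y i : coef (ladd x y) i = coef x i (+) coef y i.
Proof.
rewrite /coef /=; case: ifP => le_iM; last by rewrite !ifF //; lia.
by congr addb; congr coef; lia.
Qed.

Definition lser_of (N : int) (c : int -> bool) : lser := LSer N (fun k => c (N - k%:Z)).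

Lemma coef_lser_of N c i : (forall j, N < j -> c j = false) -> coef (lser_of N c) i = c i.
Proof.
move=> c_gt; case: (lerP i N) => [/int_le_split[k ->]|lt_Ni].
  exact: (coef_dig (lser_of N c)).
by rewrite coef_gt_lead ?c_gt.
Qed.

Definition lone : lser := LSer 0 (fun k => k == 0%N).

Lemma coef_lone i : coef lone i = (i == 0).
Proof. by rewrite /coef /=; case: ifP => le_i0; apply/idP/idP; lia. Qed.

Lemma coef_sq (a : lser) m : coef (lmul a a) (m + m) = coef a m.
Proof.
case: (lerP m (lead a)) => [/int_le_split[k ->]|lt_am]; last by rewrite !coef_gt_lead //=; lia.
rewrite (_ : _ + _ = lead (lmul a a) - (k + k)%N%:Z) /=; last lia.
rewrite !coef_dig /= (big_addb_sym (f := fun j => dig a j && dig a (k + k - j)%N)) => [|j le_j].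
  by rewrite addnn odd_double half_double (_ : (k.*2 - k)%N = k) ?andbb //; lia.
by rewrite andbC; congr (dig _ _ && dig _ _); lia.
Qed.

Lemma coef_sq_odd (a : lser) m : coef (lmul a a) (m + m + 1) = false.
Proof.
case: (lerP m (lead a - 1)) => [/int_le_split[k ->]|lt_am]; last by rewrite !coef_gt_lead //=; lia.
rewrite (_ : _ + _ + 1 = lead (lmul a a) - (k + k).+1%:Z) /=; last lia.
rewrite coef_dig /= (big_addb_sym (f := fun j => dig a j && dig a ((k + k).+1 - j)%N)) => [|j le_j].
  by rewrite addnn /= odd_double.
by rewrite andbC; congr (dig _ _ && dig _ _); lia.
Qed.

Lemma coef_tmul (b : lser) i : coef (lmul lt_ b) i = coef b (i - 1).
Proof.
case: (lerP i (lead (lmul lt_ b))) => [/int_le_split[k ->]|lt_i]; last first.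
  by rewrite !coef_gt_lead //; move: lt_i => /=; lia.
rewrite coef_dig (_ : _ - 1 = lead b - k%:Z) /=; last lia.
by rewrite coef_dig big_ord_recl subn0 big1 ?addbF.
Qed.

Lemma coef_lmul1r (a : lser) i : coef (lmul a lone) i = coef a i.
Proof.
case: (lerP i (lead (lmul a lone))) => [/int_le_split[k ->]|lt_i]; last first.
  by rewrite !coef_gt_lead //; move: lt_i => /=; lia.
rewrite coef_dig /= addr0 coef_dig big_ord_recr /= subnn andbT big1 // => j _.
by rewrite (_ : (k - j == 0)%N = false) ?andbF //; have := ltn_ord j; lia.
Qed.

Lemma coef_lmul_null (a b : lser) i : (forall j, coef b j = false) -> coef (lmul a b) i = false.
Proof.
move=> b0; rewrite /coef; case: ifP => //= _.
by rewrite big1 // => j _; rewrite -(coef_dig b) b0 andbF.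
Qed.

Definition F2_of_bool (b : bool) : 'F_2 := b%:R.

Lemma F2_of_bool_addb a b : F2_of_bool (a (+) b) = F2_of_bool a + F2_of_bool b.
Proof. by case: a; case: b; apply/val_inj. Qed.

Lemma F2_of_bool_andb a b : F2_of_bool (a && b) = F2_of_bool a * F2_of_bool b.
Proof. by case: a; case: b; rewrite /F2_of_bool ?mulr0 ?mulr1. Qed.

Lemma F2_of_bool_inj : injective F2_of_bool.
Proof. by case; case=> // /(congr1 val). Qed.

Section TakePolyMul.
Variable R : comNzRingType.
Implicit Types p q : {poly R}.

Lemma take_polyMl K p q : take_poly K (take_poly K p * q) = take_poly K (p * q).
Proof.
by rewrite -{2}(poly_take_drop K p) mulrDl mulrAC take_polyD take_polyMXn_0 addr0.
Qed.

Lemma take_polyMr K p q : take_poly K (p * take_poly K q) = take_poly K (p * q).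
Proof. by rewrite mulrC take_polyMl mulrC. Qed.

Lemma take_poly_char2 K (p q c e e' d h h' s : {poly R}) : 2 \in [pchar R] ->
  take_poly K e = take_poly K e' -> take_poly K h = take_poly K h' ->
  p + q = c * (e + e') + d * (h + h') + s *+ 2 -> take_poly K p = take_poly K q.
Proof.
move=> pchar2 eq_e eq_h eq_pq.
have pchar2_poly : 2 \in [pchar {poly R}] by rewrite pchar_poly.
have take_mul_sum0 (x u u' : {poly R}) :
    take_poly K u = take_poly K u' -> take_poly K (x * (u + u')) = 0.
  move=> eq_u; rewrite -take_polyMr take_polyD eq_u.
  by rewrite (addrr_pchar2 pchar2_poly) mulr0 take_poly0r.
apply/eqP; rewrite -subr_eq0 (oppr_pchar2 pchar2_poly) -take_polyD eq_pq.
by rewrite mulr2n (addrr_pchar2 pchar2_poly) addr0 take_polyD !take_mul_sum0 ?addr0.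
Qed.

End TakePolyMul.

(* With X = t^-1, lpoly F K a is t^-F a truncated modulo X^K: it lists the K coefficients
   of a from t^F downwards. *)
Definition lpoly (F : int) (K : nat) (a : lser) : {poly 'F_2} :=
  \poly_(k < K) F2_of_bool (coef a (F - k%:Z)).

Lemma take_lpoly F K a : take_poly K (lpoly F K a) = lpoly F K a.
Proof. exact/take_poly_id/size_poly. Qed.

Lemma lpolyD F K a b : lpoly F K (ladd a b) = lpoly F K a + lpoly F K b.
Proof.
apply/polyP=> k; rewrite coefD !coef_poly.
by case: ifP; rewrite ?addr0 // coef_ladd F2_of_bool_addb.
Qed.

Lemma eq_lpoly F K a b : lseq a b -> lpoly F K a = lpoly F K b.
Proof. by move=> eq_ab; apply/polyP=> k; rewrite !coef_poly eq_ab. Qed.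

Lemma lpoly_shift F (d : nat) K a : lead a <= F ->
  lpoly (F + d%:Z) K a = take_poly K ('X^d * lpoly F K a).
Proof.
move=> le_aF; apply/polyP=> k; rewrite coef_take_poly coef_poly coefXnM.
case: ifP => // lt_kK; case: ifP => lt_kd; first by rewrite coef_gt_lead //; lia.
by rewrite coef_poly ifT; [congr (F2_of_bool (coef _ _))|]; lia.
Qed.

Lemma lpolyM_lead K a b :
  lpoly (lead a + lead b) K (lmul a b) = take_poly K (lpoly (lead a) K a * lpoly (lead b) K b).
Proof.
apply/polyP=> k; rewrite coef_take_poly coef_poly; case: ifP => // lt_kK.
rewrite (_ : lead a + lead b = lead (lmul a b)) // coef_dig /= coefM.
rewrite (big_morph F2_of_bool F2_of_bool_addb (erefl _)); apply: eq_bigr => j _.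
by rewrite F2_of_bool_andb !coef_poly !ifT ?coef_dig //; have := ltn_ord j; lia.
Qed.

Lemma lpolyM F G K a b : lead a <= F -> lead b <= G ->
  lpoly (F + G) K (lmul a b) = take_poly K (lpoly F K a * lpoly G K b).
Proof.
move=> le_aF le_bG.
have [d1 ->] : exists d : nat, F = lead a + d%:Z by exists `|F - lead a|%N; lia.
have [d2 ->] : exists d : nat, G = lead b + d%:Z by exists `|G - lead b|%N; lia.
rewrite (_ : _ + _ = lead (lmul a b) + (d1 + d2)%N%:Z); last by rewrite /=; lia.
rewrite lpoly_shift //= lpolyM_lead take_polyMr !lpoly_shift // take_polyMl take_polyMr.
by congr take_poly; rewrite exprD; ring.
Qed.

Lemma eq_lseq_lpoly F a b : lead a <= F -> lead b <= F ->
  (forall K, lpoly F K a = lpoly F K b) -> lseq a b.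
Proof.
move=> le_aF le_bF eq_ab i; case: (lerP i F) => [/int_le_split[k ->]|lt_Fi].
  have := congr1 (fun p : {poly 'F_2} => p`_k) (eq_ab k.+1).
  by rewrite /= !coef_poly ltnSn => /F2_of_bool_inj.
by rewrite !coef_gt_lead //; lia.
Qed.

Lemma lmul_lseq a a' b b' : lseq a a' -> lseq b b' -> lseq (lmul a b) (lmul a' b').
Proof.
move=> eq_a eq_b.
pose F := Num.max (lead a) (lead a'); pose G := Num.max (lead b) (lead b').
apply: (@eq_lseq_lpoly (F + G)) => [||K]; rewrite /F /G /=; try lia.
by rewrite !lpolyM -/F -/G ?(eq_lpoly _ _ eq_a) ?(eq_lpoly _ _ eq_b) //; lia.
Qed.

Section Approximation.
Variables K l : nat.

(* approx n a p: p agrees with t^-(n l) a modulo X^K.  Scaling every datum by the same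
   power t^-l turns polynomial identities between series into identities in {poly 'F_2}. *)
Definition approx (n : nat) (a : lser) (p : {poly 'F_2}) :=
  lead a <= (n * l)%N%:Z /\ lpoly (n * l)%N K a = take_poly K p.

Lemma approx_lpoly a : lead a <= l -> approx 1 a (lpoly l K a).
Proof. by rewrite /approx mul1n take_lpoly. Qed.

Lemma approx_lone n : approx n lone ('X^l ^+ n).
Proof.
split => //.
apply/polyP=> k; rewrite coef_take_poly coef_poly -exprM mulnC coefXn coef_lone.
by case: ifP => // _; congr F2_of_bool; apply/eqP/eqP; lia.
Qed.

Lemma approxD n a b p q : approx n a p -> approx n b q -> approx n (ladd a b) (p + q).
Proof.
move=> [le_a eq_a] [le_b eq_b]; split; first by rewrite /=; lia.
by rewrite lpolyD eq_a eq_b take_polyD.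
Qed.

Lemma approxM m n a b p q :
  approx m a p -> approx n b q -> approx (m + n) (lmul a b) (p * q).
Proof.
move=> [le_a eq_a] [le_b eq_b]; split; first by rewrite /=; lia.
by rewrite mulnDl PoszD lpolyM // eq_a eq_b take_polyMl take_polyMr.
Qed.

Lemma approx_lift m n a p : approx m a p -> approx (m + n) a ('X^l ^+ n * p).
Proof.
move=> [le_a eq_a]; split; first lia.
by rewrite mulnDl PoszD lpoly_shift // eq_a take_polyMr -exprM mulnC.
Qed.

Lemma approx_lseq n a b p q : lseq a b -> approx n a p -> approx n b q ->
  take_poly K p = take_poly K q.
Proof. by move=> eq_ab [_ <-] [_ <-]; apply: eq_lpoly. Qed.

End Approximation.

Lemma lseq_approx l n a b :
  (forall K, exists p q, [/\ approx K l n a p, approx K l n b q & take_poly K p = take_poly K q]) ->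
  lseq a b.
Proof.
move=> ab_approx; have [p [q [[le_a _] [le_b _] _]]] := ab_approx 0%N.
apply: (eq_lseq_lpoly le_a le_b) => K.
by have [p' [q' [[_ ->] [_ ->] ->]]] := ab_approx K.
Qed.

Lemma conic_change_of_variables x0 x1 x2 y z w :
  lseq (ladd (ladd (lmul x0 x0) (lmul x0 x1)) (lmul y (lmul x1 x1))) (lmul lt_ (lmul x2 x2)) ->
  lseq (ladd y lone) (ladd (ladd (lmul z z) z) (lmul lt_ (lmul w w))) ->
  let X := ladd x0 (lmul z x1) in let Z := ladd x2 (lmul w x1) in
  lseq (ladd (ladd (lmul X X) (lmul X x1)) (lmul x1 x1)) (lmul lt_ (lmul Z Z)).
Proof.
move=> eq_x eq_y X Z.
have [l [[le0 le1 le2 ley] [lez lew l_gt0]]] : exists l : nat,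
    [/\ lead x0 <= l, lead x1 <= l, lead x2 <= l & lead y <= l] /\
    [/\ lead z <= l, lead w <= l & (0 < l)%N].
  exists (`|lead x0| + `|lead x1| + `|lead x2| + `|lead y| + `|lead z| + `|lead w|).+1.
  by split; split; lia.
apply: (@lseq_approx l 5) => K.
have r0 := approx_lpoly K le0; have r1 := approx_lpoly K le1; have r2 := approx_lpoly K le2.
have ry := approx_lpoly K ley; have rz := approx_lpoly K lez; have rw := approx_lpoly K lew.
have rt : approx K l 1 lt_ (lpoly l K lt_) by apply: approx_lpoly; rewrite /=; lia.
have rE := approx_lseq eq_x
  (approxD (approxD (approx_lift 1 (approxM r0 r0)) (approx_lift 1 (approxM r0 r1)))
           (approxM ry (approxM r1 r1)))
  (approxM rt (approxM r2 r2)).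
have rH := approx_lseq eq_y (approxD (approx_lift 2 ry) (approx_lone K l 3))
  (approxD (approxD (approx_lift 1 (approxM rz rz)) (approx_lift 2 rz))
           (approxM rt (approxM rw rw))).
have rX := approxD (approx_lift 1 r0) (approxM rz r1).
have rZ := approxD (approx_lift 1 r2) (approxM rw r1).
have rL := approxD (approxD (approx_lift 1 (approxM rX rX)) (approx_lift 2 (approxM rX r1)))
  (approx_lift 3 (approxM r1 r1)).
have rR := approxM rt (approxM rZ rZ).
do 2 eexists; split; [exact: rL | exact: rR |].
set u := 'X^l; set p0 := lpoly l K x0; set p1 := lpoly l K x1; set p2 := lpoly l K x2.
set py := lpoly l K y; set pz := lpoly l K z; set pw := lpoly l K w; set pt := lpoly l K lt_.
(* The cross terms of the two squares and the two copies of y x1^2 cancel in characteristic 2. *)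
apply: (take_poly_char2 (c := u ^+ 2) (d := p1 * p1)
  (s := u * p1 * (u * p0 * pz + pt * p2 * pw - u * py * p1)) (@pchar_Fp 2 isT) rE rH).
rewrite {}/u {}/p0 {}/p1 {}/p2 {}/py {}/pz {}/pw {}/pt; ring.
Qed.

Lemma exists_top (P : pred int) (M : int) :
  (forall i, M < i -> ~~ P i) -> (exists i, P i) -> exists m, P m /\ forall i, m < i -> ~~ P i.
Proof.
move=> P_gt [i Pi].
have ex_k : exists k : nat, P (M - k%:Z).
  exists `|M - i|%N; case: (lerP i M) => [le_iM|/P_gt]; last by rewrite Pi.
  by rewrite (_ : M - _ = i) //; lia.
have [k0 Pk0 k0_min] := ex_minnP ex_k.
exists (M - k0%:Z); split => // j lt_j; apply/negP => Pj.
case: (lerP j M) => [/int_le_split[k ej]|/P_gt]; last by rewrite Pj.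
by have := k0_min k; rewrite -ej => /(_ Pj); lia.
Qed.

Definition vanish_above (a : lser) (m : int) := forall i, m < i -> coef a i = false.

Lemma coef_lmul_vanish a b m n : vanish_above a m -> vanish_above b n ->
  coef (lmul a b) (m + n) = coef a m && coef b n.
Proof.
move=> va vb; pose a' := lser_of m (coef a); pose b' := lser_of n (coef b).
have eq_a : lseq a a' by move=> i; rewrite coef_lser_of.
have eq_b : lseq b b' by move=> i; rewrite coef_lser_of.
rewrite (lmul_lseq eq_a eq_b) -[m + n]subr0 -[m + n]/(lead (lmul a' b')) coef_dig.
by rewrite /= big_ord_recl big_ord0 !subr0 addbF.
Qed.

Lemma exists_common_top X Y : lnonzero X \/ lnonzero Y ->
  exists m, [/\ vanish_above X m, vanish_above Y m & coef X m || coef Y m].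
Proof.
move=> nz_XY; pose P := [pred i | coef X i || coef Y i].
have P_gt i : Num.max (lead X) (lead Y) < i -> ~~ P i.
  by move=> lt_i; rewrite /= !coef_gt_lead //; lia.
have P_ex : exists i, P i by case: nz_XY => -[i nz_i]; exists i; rewrite /= nz_i ?orbT.
have [m [top above]] := exists_top P_gt P_ex.
by exists m; split=> // i /above; rewrite negb_or => /andP[/negbTE ? /negbTE ?].
Qed.

Lemma norm_form_anisotropic X Y Z :
  lseq (ladd (ladd (lmul X X) (lmul X Y)) (lmul Y Y)) (lmul lt_ (lmul Z Z)) ->
  [/\ ~ lnonzero X, ~ lnonzero Y & ~ lnonzero Z].
Proof.
move=> eq_XYZ.
have nz_XY : ~ (lnonzero X \/ lnonzero Y).
  case/exists_common_top=> m [vX vY top]; have := eq_XYZ (m + m).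
  rewrite !coef_ladd !coef_sq coef_lmul_vanish // coef_tmul.
  rewrite (_ : m + m - 1 = (m - 1) + (m - 1) + 1) ?coef_sq_odd; last lia.
  by move: top; case: (coef X m); case: (coef Y m).
have X0 i : coef X i = false by apply/negbTE/negP => Xi; apply: nz_XY; left; exists i.
have Y0 i : coef Y i = false by apply/negbTE/negP => Yi; apply: nz_XY; right; exists i.
split=> -[i]; rewrite ?X0 ?Y0 // => Zi.
have := eq_XYZ (i + i + 1); rewrite !coef_ladd !coef_sq_odd coef_lmul_null // coef_tmul.
by rewrite (_ : i + i + 1 - 1 = i + i) ?coef_sq ?Zi //; lia.
Qed.

Section ArtinSchreier.
Variable y : lser.

(* z_m = a_{2m} + a_{4m} + ... for m > 0 (the terms beyond a_{2^(|lead y|+1) m} vanish), and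
   z_m = a_m + a_{m/2} + ... down to the first odd index for m < 0. *)
Definition as_root_coef (i : int) : bool :=
  match i with
  | Posz 0 => false
  | Posz n => \big[addb/false]_(k < `|lead y|.+1) coef y (Posz (2 ^ k.+1 * n))
  | Negz n => \big[addb/false]_(k < logn 2 n.+1) coef y (- Posz (n.+1 %/ 2 ^ k))
  end.

Lemma as_root_coef_gt i : lead y < i -> as_root_coef i = false.
Proof.
case: i => [[|n]|n] lt_i //=; rewrite big1 // => k _; rewrite coef_gt_lead //.
  by have := expn_gt0 2 k.+1; nia.
by have := leq_div n.+1 (2 ^ k); move: lt_i; rewrite NegzE; lia.
Qed.

Lemma as_root_coef_double m : coef y 0 = false ->
  coef y (m + m) = as_root_coef m (+) as_root_coef (m + m).
Proof.
move=> y0; case: m => [[|n]|n].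
- by rewrite addr0 y0.
- rewrite (_ : Posz n.+1 + Posz n.+1 = Posz n.*2.+2) /=; last lia.
  rewrite big_ord_recl big_ord_recr /= expn1 (_ : (2 * n.+1 = n.*2.+2)%N); last lia.
  rewrite [coef y (Posz (2 ^ _.+1 * _))]coef_gt_lead; last first.
    by have := ltn_expl `|lead y|.+1 (ltnSn 1); nia.
  set S := \big[addb/false]_(i < _) coef y (Posz (2 ^ i.+1 * n.*2.+2)).
  have -> : S = \big[addb/false]_(i < `|lead y|) coef y (Posz (2 ^ (bump 0 i).+1 * n.+1)).
    by apply: eq_bigr => k _; rewrite (expnS 2 k.+1); congr (coef y (Posz _)); lia.
  by rewrite addbF -addbA addbb addbF.
- rewrite (_ : Negz n + Negz n = Negz n.*2.+1) /=; last by rewrite !NegzE; lia.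
  rewrite -doubleS -[n.+1.*2]mul2n lognM // (@logn_prime 2 2) //= big_ord_recl /= expn0 divn1.
  set S := \big[addb/false]_(i < _) coef y (- Posz ((2 * n.+1) %/ _)).
  have -> : S = \big[addb/false]_(i < logn 2 n.+1) coef y (- Posz (n.+1 %/ 2 ^ i)).
    by apply: eq_bigr => k _; rewrite expnS divnMl.
  by rewrite NegzE mul2n doubleS addbC -addbA addbb addbF.
Qed.

Definition as_root : lser := lser_of `|lead y|%N as_root_coef.
Definition as_rest : lser :=
  lser_of `|lead y|%N (fun m => coef y (m + m + 1) (+) as_root_coef (m + m + 1)).

Lemma artin_schreier_tsq : coef y 0 = false ->
  lseq y (ladd (ladd (lmul as_root as_root) as_root) (lmul lt_ (lmul as_rest as_rest))).
Proof.
move=> y0 i; have root_gt (j : int) : (`|lead y|%N : int) < j -> as_root_coef j = false.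
  by move=> lt_j; apply: as_root_coef_gt; lia.
have [m [->|->]] : exists m, i = m + m \/ i = m + m + 1 by exists (i %/ 2)%Z; lia.
- rewrite !coef_ladd coef_tmul coef_sq.
  rewrite (_ : m + m - 1 = (m - 1) + (m - 1) + 1) ?coef_sq_odd; last lia.
  by rewrite addbF !coef_lser_of // as_root_coef_double.
- rewrite !coef_ladd coef_tmul coef_sq_odd (_ : m + m + 1 - 1 = m + m) ?coef_sq; last lia.
  rewrite !coef_lser_of // => [|j lt_j]; first by case: (as_root_coef _); case: (coef y _).
  by rewrite root_gt ?coef_gt_lead //; lia.
Qed.

End ArtinSchreier.

Theorem lemma3p7 (y : lser) : conic_has_point y <-> coef y 0%R = false.
Proof.
split=> [[x0 [x1 [x2 [nz_x eq_x]]]] | y0].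
- apply/negbTE/negP => y0.
  have y1_0 : coef (ladd y lone) 0 = false by rewrite coef_ladd coef_lone y0.
  have [nz_X nz_x1 nz_Z] :=
    norm_form_anisotropic (conic_change_of_variables eq_x (artin_schreier_tsq y1_0)).
  have x1_0 i : coef x1 i = false by apply/negbTE/negP => x1i; apply: nz_x1; exists i.
  case: nz_x => [[i x0i]|[[i x1i]|[i x2i]]].
  + by apply: nz_X; exists i; rewrite coef_ladd coef_lmul_null // x0i.
  + by rewrite x1_0 in x1i.
  + by apply: nz_Z; exists i; rewrite coef_ladd coef_lmul_null // x2i.
- exists (as_root y), lone, (as_rest y); split; first by right; left; exists 0; rewrite coef_lone.
  have lone2 : lseq (lmul lone lone) lone := coef_lmul1r lone.
  move=> i; have := artin_schreier_tsq y0 i.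
  rewrite !coef_ladd coef_lmul1r (lmul_lseq (fun j => erefl (coef y j)) lone2) coef_lmul1r => ->.
  by case: (coef (lmul _ _) i); case: (coef (as_root y) i); case: (coef (lmul lt_ _) i).
Qed.
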